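(* Let $\mu$ be a critical offspring distribution, let $X_1,X_2,\dots$ be i.i.d. with $\mathbf P(X_1=k)=\mu_{k+1}$ for $k\ge-1$, and $S_m=X_1+\dots+X_m$ ($S_0=0$). For every $\varepsilon>0$ there exists $\delta>0$ such that for all sufficiently large $n$ with $\mathbf P(S_n=-1)>0$, \[ \mathbf P\Big(\max_{0\le m\le n}|S_m|\ge\varepsilon n\ \Big|\ S_n=-1\Big)\le e^{-\delta n}. \]
   Context: An offspring distribution is a probability measure $\mu=(\mu_k)_{k\ge0}$ on $\mathbb Z_+$; it is critical if $\sum_kk\mu_k=1$. *)

From HB Require Import structures.
From mathcomp Require Import all_boot all_order all_algebra.
From mathcomp Require Import all_classical all_reals all_analysis.
Set Implicit Arguments. Unset Strict Implicit. Unset Printing Implicit Defensive.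
Import Order.TTheory GRing.Theory Num.Theory.
Import numFieldNormedType.Exports.
Local Open Scope classical_set_scope.
Local Open Scope ring_scope.

(* Steps X_i = xi_i - 1 with xi_i i.i.d. of law mu.  On the event S_n = -1
   one has xi_1 + ... + xi_n = n - 1, hence each xi_i <= n - 1, so the whole
   event lives in the finite set of n-tuples with entries in 'I_n. *)

Definition offspring_dist (R : realType) (mu : nat -> R) : Prop :=
  (forall k, 0 <= mu k) /\ series mu @ \oo --> (1 : R).

Definition critical (R : realType) (mu : nat -> R) : Prop :=
  series (fun k => k%:R * mu k) @ \oo --> (1 : R).

Definition walkS (R : realType) (n : nat) (x : n.-tuple 'I_n) (m : nat) : R :=
  \sum_(i < n | (i < m)%N) ((tnth x i)%:R - 1).

(* P( S_n = -1 and E ), where E is an event about (xi_1,...,xi_n) *)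
Definition probSn_neg1 (R : realType) (mu : nat -> R) (n : nat)
    (E : pred (n.-tuple 'I_n)) : R :=
  \sum_(x : n.-tuple 'I_n | ((\sum_(i < n) (tnth x i : nat)).+1 == n) && E x)
     \prod_(i < n) mu (tnth x i).

Definition bigmax_event (R : realType) (n : nat) (eps : R) : pred (n.-tuple 'I_n) :=
  fun x => [exists m : 'I_n.+1, eps * n%:R <= `| walkS R x m |].

Arguments probSn_neg1 {R} mu n E.
Arguments bigmax_event {R} n eps.

From HB Require Import structures.
From mathcomp Require Import all_boot all_order all_algebra.
From mathcomp Require Import all_classical all_reals all_analysis.
From mathcomp Require Import ring lra zify.
Import Order.TTheory GRing.Theory Num.Theory.
Import numFieldNormedType.Exports.
Set Implicit Arguments. Unset Strict Implicit. Unset Printing Implicit Defensive.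
Local Open Scope ring_scope.

(* The numerator decays exponentially and the denominator does not.

   Numerator: on [S_n = -1], [|S_m| >= eps n] forces the sum of the first [m]
   steps or of the last [n - m] steps to be at most [- eps n].  The steps are
   centred, so [E (expR (- th X)) <= 1 + th eps / 4] for a small tilt [th], and
   the exponential Chebyshev inequality bounds each of these [2 (n + 1)] events
   by [expR (- th eps n) (1 + th eps / 4) ^ n <= expR (- 3 th eps n / 4)].

   Denominator: for every [eta > 0], [P (S_N = -1) >= expR (- eta N)] for large
   [N] with [P (S_N = -1) > 0].  By a truncated second-moment estimate, with
   probability at least [1/2] the first [N - M] steps, [M ~ N / p], have total
   within [N / p] of its mean.  The support of [mu] contains [0] and some
   [k >= 2], so every large multiple of the gcd of the semigroup it generates is
   a sum of at most [M] bounded support points: the last [M] steps make up the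
   deficit at a cost [c ^ M = expR (- O (N / p))]. *)

Section TupleSums.
Variables (T : finType) (p : nat).

Lemma sum_prod_tuple (R : comPzSemiRingType) (F : 'I_p -> T -> R) :
  \sum_(x : p.-tuple T) \prod_(i < p) F i (tnth x i) = \prod_(i < p) \sum_k F i k.
Proof.
rewrite bigA_distr_bigA /= (reindex (@tuple_of_finfun _ p)) /=; last first.
  by exists (@finfun_of_tuple _ p) => x _; rewrite ?tuple_of_finfunK ?finfun_of_tupleK.
by apply: eq_bigr => f _; apply: eq_bigr => i _; rewrite tnth_mktuple.
Qed.

Lemma sum_prod_tuple_le (R : numDomainType) (F : 'I_p -> T -> R) (U : R) :
  (forall i k, 0 <= F i k) -> (forall i, \sum_k F i k <= U) ->
  \sum_(x : p.-tuple T) \prod_(i < p) F i (tnth x i) <= U ^+ p.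
Proof.
move=> F0 FU; have -> : U ^+ p = \prod_(i < p) U by rewrite prodr_const card_ord.
rewrite sum_prod_tuple.
by apply: ler_prod => i _; rewrite FU sumr_ge0.
Qed.

Section Moments.
Variables (R : realDomainType) (w g : T -> R).
Hypotheses (w_ge0 : forall k, 0 <= w k) (w_le1 : \sum_k w k <= 1).
Let W (x : p.-tuple T) := \prod_(i < p) w (tnth x i).
Let Bs := \sum_k w k * g k ^+ 2.
Let Cs := \sum_k w k * g k.

Let prod_other_le1 (P : pred 'I_p) (F : 'I_p -> T -> R) :
  (forall i, P i -> F i =1 w) -> \prod_(i < p | P i) \sum_k F i k <= 1.
Proof.
move=> PF; apply: prodr_ile1 => i Pi.
by rewrite (eq_bigr _ (fun k _ => PF i Pi k)) w_le1 sumr_ge0.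
Qed.

Lemma sum_prod_tuple_mixed_le (i j : 'I_p) :
  \sum_(x : p.-tuple T) W x * (g (tnth x i) * g (tnth x j))
    <= (if i == j then Bs else 0) + Cs ^+ 2.
Proof.
pose F l k := w k * ((if l == i then g k else 1) * (if l == j then g k else 1)).
have -> : \sum_(x : p.-tuple T) W x * (g (tnth x i) * g (tnth x j))
    = \sum_(x : p.-tuple T) \prod_(l < p) F l (tnth x l).
  apply: eq_bigr => x _; rewrite /W /F !big_split /= -!big_mkcond /=.
  by rewrite !big_pred1_eq.
have Fw l : l != i -> l != j -> F l =1 w.
  by move=> /negbTE li /negbTE lj k; rewrite /F li lj !mulr1.
rewrite sum_prod_tuple (bigD1 i) //=; have [ij|ij] := eqVneq i j.
  subst j; have -> : \sum_k F i k = Bs by apply: eq_bigr => k _; rewrite /F eqxx expr2.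
  have others : \prod_(l < p | l != i) \sum_k F l k <= 1.
    by apply: prod_other_le1 => l li; exact: Fw.
  apply: ler_wpDr; first exact: sqr_ge0.
  by apply: ler_piMr others; apply: sumr_ge0 => k _; rewrite mulr_ge0 ?sqr_ge0.
rewrite add0r (bigD1 j) 1?eq_sym //= mulrA.
have -> : \sum_k F i k = Cs by apply: eq_bigr => k _; rewrite /F eqxx (negbTE ij) mulr1.
have -> : \sum_k F j k = Cs.
  by apply: eq_bigr => k _; rewrite /F eqxx eq_sym (negbTE ij) mul1r.
have others : \prod_(l < p | (l != i) && (l != j)) \sum_k F l k <= 1.
  by apply: prod_other_le1 => l /andP[li lj]; exact: Fw.
by rewrite -expr2; apply: ler_piMr others; exact: sqr_ge0.
Qed.

Lemma second_moment_tuple_le :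
  \sum_(x : p.-tuple T) W x * (\sum_(i < p) g (tnth x i)) ^+ 2
    <= p%:R * Bs + p%:R ^+ 2 * Cs ^+ 2.
Proof.
have -> : \sum_(x : p.-tuple T) W x * (\sum_(i < p) g (tnth x i)) ^+ 2
    = \sum_(x : p.-tuple T) \sum_(i < p) \sum_(j < p) W x * (g (tnth x i) * g (tnth x j)).
  apply: eq_bigr => x _; rewrite expr2 mulr_suml mulr_sumr.
  by apply: eq_bigr => i _; rewrite !mulr_sumr.
rewrite exchange_big; under eq_bigr do rewrite exchange_big.
apply: le_trans (ler_sum _ (fun i _ => ler_sum _ (fun j _ => sum_prod_tuple_mixed_le i j))) _.
have diag i : \sum_(j < p) (if i == j then Bs else 0) = Bs.
  by rewrite -big_mkcond /= (big_pred1 i) // => j; rewrite eq_sym.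
under eq_bigr do rewrite big_split /= diag sumr_const card_ord.
rewrite big_split /= !sumr_const !card_ord; lra.
Qed.

End Moments.
End TupleSums.

Lemma chebyshev_finsum (T : finType) (R : realDomainType) (P : pred T) (W f : T -> R) (v : R) :
  (forall y, 0 <= W y) -> 0 <= v -> (forall y, P y -> v <= `|f y|) ->
  v ^+ 2 * \sum_(y | P y) W y <= \sum_y W y * f y ^+ 2.
Proof.
move=> W0 v0 Pv; rewrite mulr_sumr [X in _ <= X](bigID P) /= ler_wpDr //.
  by apply: sumr_ge0 => y _; rewrite mulr_ge0 ?W0 ?sqr_ge0.
apply: ler_sum => y Py; rewrite mulrC ler_wpM2l ?W0 //.
have vf := Pv y Py; rewrite -[f y ^+ 2]real_normK ?num_real //; nra.
Qed.

Lemma sum_inj_le (I J : finType) (R : numDomainType) (phi : I -> J) (P : pred J) (F : J -> R) :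
  injective phi -> (forall j, 0 <= F j) ->
  \sum_(i | P (phi i)) F (phi i) <= \sum_(j | P j) F j.
Proof.
move=> phi_inj F0.
rewrite -(big_imset _ (in2W phi_inj)) /= big_mkcond [X in _ <= X]big_mkcond /=.
apply: ler_sum => j _; case: imsetP => [[i Pi ->]|_]; last by case: (P j).
by rewrite unfold_in in Pi; rewrite Pi.
Qed.

Section SeriesBounds.
Variables (R : realType) (u : nat -> R) (l : R).
Hypothesis u_cvg : (series u @ \oo --> l)%classic.

Lemma series_ge0_le_lim : (forall k, 0 <= u k) -> forall n, series u n <= l.
Proof.
move=> u0 n; have u_nd : nondecreasing_seq (series u).
  by apply/nondecreasing_seqP => k; rewrite /series /= big_nat_recr //= lerDl.
by rewrite -(cvg_lim _ u_cvg) //; apply: nondecreasing_cvgn_le (cvgP _ u_cvg) n.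
Qed.

Lemma series_near_lim e : 0 < e -> exists N, forall n, (N <= n)%N -> l - e <= series u n.
Proof.
move: u_cvg => /cvgrPdist_le u_near e_gt0; have [N _ HN] := u_near e e_gt0.
by exists N => n /HN; rewrite ler_distlC => /andP[].
Qed.

End SeriesBounds.

Section Offspring.
Variables (R : realType) (mu : nat -> R).
Hypotheses (hmu : offspring_dist mu) (hcrit : critical mu).

Definition partial_mass n := \sum_(0 <= k < n) mu k.
Definition partial_mean n := \sum_(0 <= k < n) k%:R * mu k.

Lemma mu_ge0 k : 0 <= mu k. Proof. exact: hmu.1 k. Qed.

Lemma partial_mass_ge0 n : 0 <= partial_mass n.
Proof. by apply: sumr_ge0 => k _; apply: mu_ge0. Qed.

Lemma partial_mean_ge0 n : 0 <= partial_mean n.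
Proof. by apply: sumr_ge0 => k _; rewrite mulr_ge0 ?mu_ge0. Qed.

Lemma partial_mass_le1 n : partial_mass n <= 1.
Proof. exact: series_ge0_le_lim hmu.2 mu_ge0 n. Qed.

Lemma partial_mean_le1 n : partial_mean n <= 1.
Proof. by apply: series_ge0_le_lim hcrit _ n => k; rewrite mulr_ge0 ?mu_ge0. Qed.

Lemma partial_mass_near1 e : 0 < e ->
  exists N, forall n, (N <= n)%N -> 1 - e <= partial_mass n.
Proof. by move=> /(series_near_lim hmu.2) [N HN]; exists N => n /HN. Qed.

Lemma partial_mean_near1 e : 0 < e ->
  exists N, forall n, (N <= n)%N -> 1 - e <= partial_mean n.
Proof. by move=> /(series_near_lim hcrit) [N HN]; exists N => n /HN. Qed.

Lemma partial_mass_split m n : (m <= n)%N ->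
  partial_mass n = partial_mass m + \sum_(m <= k < n) mu k.
Proof. exact: big_cat_nat. Qed.

Lemma partial_mean_split m n : (m <= n)%N ->
  partial_mean n = partial_mean m + \sum_(m <= k < n) k%:R * mu k.
Proof. exact: big_cat_nat. Qed.

Lemma mu_le1 k : mu k <= 1.
Proof.
apply: le_trans (partial_mass_le1 k.+1).
by rewrite (partial_mass_split (leqnSn k)) big_nat1 lerDr partial_mass_ge0.
Qed.

(* In probabilistic terms [n P (xi >= n) <= E (xi; xi >= n)]. *)
Lemma tail_mass_le n : n%:R * (1 - partial_mass n) <= 1 - partial_mean n.
Proof.
apply/ler_addgt0Pr => e e_gt0.
have [N HN] := partial_mass_near1 (divr_gt0 e_gt0 (ltr0Sn R n)).
pose L := maxn N n; have nL : (n <= L)%N by rewrite leq_maxr.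
have tail_le : n%:R * (partial_mass L - partial_mass n) <= partial_mean L - partial_mean n.
  rewrite (partial_mass_split nL) (partial_mean_split nL).
  rewrite [partial_mass n + _]addrC [partial_mean n + _]addrC !addrK mulr_sumr.
  by apply: ler_sum_nat => k /andP[nk _]; rewrite ler_wpM2r ?mu_ge0 ?ler_nat.
have rest_le : n%:R * (1 - partial_mass L) <= e.
  have : 1 - partial_mass L <= e / n.+1%:R by rewrite lerBlDr addrC -lerBlDr HN ?leq_maxl.
  rewrite ler_pdivlMr ?ltr0Sn // => h; apply: le_trans h.
  by rewrite mulrC ler_wpM2l ?subr_ge0 ?partial_mass_le1 ?ler_nat.
have := partial_mean_le1 L; lra.
Qed.

End Offspring.

Section ExpBounds.
Variable R : realType.

Lemma expR_le_quad (t : R) : 0 <= t -> t <= 1/2 -> expR t <= 1 + t + 2 * t ^+ 2.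
Proof.
move=> t0 t_le; have t_lt1 : 0 < 1 - t by lra.
have : expR t * (1 - t) <= 1.
  by have := expR_ge1Dx (- t); rewrite -(ler_pM2l (expR_gt0 t)) -expRD subrr expR0.
move=> exp_le; rewrite -(ler_pM2r t_lt1); apply: le_trans exp_le _.
have : 0 <= t ^+ 2 * (1 - 2 * t) by rewrite mulr_ge0 ?sqr_ge0 //; lra.
lra.
Qed.

Lemma expRN_le_quad (t : R) : 0 <= t -> expR (- t) <= 1 - t + t ^+ 2.
Proof.
move=> t0; have t_gt1 : 0 < 1 + t by lra.
have : expR (- t) * (1 + t) <= 1.
  by have := expR_ge1Dx t; rewrite -(ler_pM2l (expR_gt0 (- t))) -expRD addNr expR0.
move=> exp_le; rewrite -(ler_pM2r t_gt1); apply: le_trans exp_le _.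
have : 0 <= t ^+ 3 by rewrite exprn_ge0.
lra.
Qed.

(* The error term for the step [k - 1]: quadratic in [th] for small [k], and
   the trivial bound [expR (- th (k - 1)) <= 1] beyond the cutoff [L]. *)
Lemma expR_step_le (th : R) (L k : nat) : 0 <= th -> th <= 1/2 ->
  expR (- (th * (k%:R - 1))) <= 1 - th * (k%:R - 1) +
    (if (k <= L)%N then th ^+ 2 * (2 + L%:R * k%:R) else th * k%:R).
Proof.
move=> th0 th_le; case: leqP => [kL|Lk]; last first.
  have k1 : 1 <= k%:R :> R by rewrite ler1n (leq_ltn_trans _ Lk).
  have : expR (- (th * (k%:R - 1))) <= 1 by rewrite expR_le1 oppr_le0 mulr_ge0 ?subr_ge0.
  lra.
case: k kL => [|k] kL.
  rewrite mulr0n mulr0 addr0 sub0r mulrN1 opprK; have := expR_le_quad th0 th_le; lra.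
rewrite -natr1 addrK; have := expRN_le_quad (mulr_ge0 th0 (ler0n R k)).
have : (th * k%:R) ^+ 2 <= th ^+ 2 * (L%:R * k.+1%:R).
  rewrite exprMn ler_wpM2l ?sqr_ge0 // expr2 ler_pM ?ler_nat //; exact: ltnW.
have : 0 <= th ^+ 2 * 2 by rewrite mulr_ge0 ?sqr_ge0.
rewrite mulrDr -natr1; lra.
Qed.

End ExpBounds.

Section Laplace.
Variables (R : realType) (mu : nat -> R).
Hypotheses (hmu : offspring_dist mu) (hcrit : critical mu).

Lemma laplace_trunc_le (th : R) (L n : nat) : 0 <= th -> th <= 1/2 -> (L < n)%N ->
  \sum_(k < n) mu k * expR (- (th * (k%:R - 1)))
    <= 1 + th * (1 - partial_mean mu L.+1) + th ^+ 2 * (L%:R + 2).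
Proof.
move=> th0 th_le Ln.
pose err k := if (k <= L)%N then th ^+ 2 * (2 + L%:R * k%:R) else th * k%:R.
rewrite -(big_mkord xpredT (fun k => mu k * expR (- (th * (k%:R - 1))))).
apply: le_trans (_ : \sum_(0 <= k < n) (mu k * (1 - th * (k%:R - 1)) + mu k * err k) <= _).
  by apply: ler_sum_nat => k _; rewrite -mulrDr ler_wpM2l ?(mu_ge0 hmu) ?expR_step_le.
have main_eq : \sum_(0 <= k < n) mu k * (1 - th * (k%:R - 1))
    = (1 + th) * partial_mass mu n - th * partial_mean mu n.
  by rewrite mulr_sumr mulr_sumr -sumrB; apply: eq_bigr => k _; ring.
have err_low : \sum_(0 <= k < L.+1) mu k * err k
    = th ^+ 2 * 2 * partial_mass mu L.+1 + th ^+ 2 * L%:R * partial_mean mu L.+1.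
  rewrite !mulr_sumr -big_split /=; apply: eq_big_nat => k /andP[_ kL].
  by rewrite /err -ltnS kL; ring.
have err_high : \sum_(L.+1 <= k < n) mu k * err k
    = th * (partial_mean mu n - partial_mean mu L.+1).
  rewrite (partial_mean_split _ Ln) [partial_mean _ L.+1 + _]addrC addrK mulr_sumr.
  by apply: eq_big_nat => k /andP[Lk _]; rewrite /err leqNgt Lk /=; ring.
rewrite big_split /= main_eq (big_cat_nat (leq0n L.+1) Ln) /= err_low err_high.
have := partial_mass_le1 hmu n; have := partial_mass_le1 hmu L.+1.
have := partial_mean_le1 hmu hcrit L.+1; have := partial_mass_ge0 hmu n.
have := partial_mean_ge0 hmu L.+1.
have : L%:R * partial_mean mu L.+1 <= L%:R by rewrite ler_piMr ?partial_mean_le1.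
nra.
Qed.

Lemma laplace_le (eta : R) : 0 < eta -> exists th : R, [/\ 0 < th, th <= 1/2 &
  exists N, forall n, (N <= n)%N ->
    \sum_(k < n) mu k * expR (- (th * (k%:R - 1))) <= 1 + th * eta].
Proof.
move=> eta0; have [L HL] := partial_mean_near1 hcrit (divr_gt0 eta0 (ltr0Sn R 1)).
have L2 : 0 < L%:R + 2 :> R by rewrite ltr_wpDl.
pose th := Num.min (1/2) (eta / (2 * (L%:R + 2))).
have th0 : 0 < th by rewrite lt_min divr_gt0 ?mulr_gt0 //; lra.
have th_le : th <= 1/2 by rewrite ge_min lexx.
have thL : th * (L%:R + 2) <= eta / 2.
  have : th <= eta / (2 * (L%:R + 2)) by rewrite ge_min lexx orbT.
  rewrite !ler_pdivlMr ?mulr_gt0 //; lra.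
exists th; split => //; exists L.+1 => n Ln.
apply: le_trans (laplace_trunc_le (ltW th0) th_le Ln) _.
have mean_near := HL L.+1 (leqnSn L).
have : th * (1 - partial_mean mu L.+1) <= th * (eta / 2).
  by rewrite ler_wpM2l ?(ltW th0) //; lra.
have : th ^+ 2 * (L%:R + 2) <= th * (eta / 2) by rewrite expr2 -mulrA ler_wpM2l ?(ltW th0).
lra.
Qed.

End Laplace.

Section Numerator.
Variables (R : realType) (mu : nat -> R).
Hypothesis hmu : offspring_dist mu.

Definition tuple_weight p q (x : p.-tuple 'I_q) := \prod_(i < p) mu (tnth x i).

Definition steps_sum n (B : pred 'I_n) (x : n.-tuple 'I_n) : R :=
  \sum_(i < n | B i) ((tnth x i : nat)%:R - 1).

Lemma tuple_weight_ge0 p q (x : p.-tuple 'I_q) : 0 <= tuple_weight x.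
Proof. by apply: prodr_ge0 => i _; apply: mu_ge0. Qed.

Lemma chernoff_steps n (B : pred 'I_n) (th a U : R) : 0 <= th -> 1 <= U ->
  \sum_(k < n) mu k * expR (- (th * (k%:R - 1))) <= U ->
  \sum_(x : n.-tuple 'I_n | steps_sum B x <= - a) tuple_weight x
    <= expR (- (th * a)) * U ^+ n.
Proof.
move=> th0 U1 laplace_U.
pose F (i : 'I_n) (k : 'I_n) := mu k * (if B i then expR (- (th * ((k : nat)%:R - 1))) else 1).
have F0 i k : 0 <= F i k by rewrite mulr_ge0 ?(mu_ge0 hmu) //; case: (B i); rewrite ?expR_ge0.
apply: le_trans (_ : \sum_x expR (- (th * a)) * \prod_(i < n) F i (tnth x i) <= _); last first.
  rewrite -mulr_sumr ler_wpM2l ?expR_ge0 //; apply: sum_prod_tuple_le => // i.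
  under eq_bigr do rewrite /F; case: (B i).
    exact: laplace_U.
  under eq_bigr do rewrite mulr1; apply: le_trans U1.
  by have := partial_mass_le1 hmu n; rewrite /partial_mass big_mkord.
rewrite [X in _ <= X](bigID (fun x => steps_sum B x <= - a)) /= ler_wpDr //.
  by apply: sumr_ge0 => x _; rewrite mulr_ge0 ?expR_ge0 // prodr_ge0.
apply: ler_sum => x Sx; rewrite /tuple_weight /F big_split /= -big_mkcond /= mulrCA.
apply: ler_peMr; first exact: tuple_weight_ge0.
rewrite -expR_sum -expRD; apply: le_trans (expR_ge1Dx _); rewrite lerDl.
rewrite sumrN -opprD oppr_ge0 -mulr_sumr -mulrDr mulr_ge0_le0 //.
by move: Sx; rewrite /steps_sum; lra.
Qed.

Lemma steps_sum_all n (x : n.-tuple 'I_n) : (\sum_(i < n) (tnth x i : nat)).+1 = n ->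
  steps_sum predT x = -1.
Proof.
move=> sum_x; rewrite /steps_sum sumrB -natr_sum sumr_const card_ord.
have -> : 1 *+ n = (\sum_(i < n) (tnth x i : nat))%:R + 1 :> R by rewrite natr1 sum_x.
by rewrite opprD addrA subrr sub0r.
Qed.

Lemma bigmax_event_steps n (eps : R) (x : n.-tuple 'I_n) :
  ((\sum_(i < n) (tnth x i : nat)).+1 == n) && bigmax_event n eps x ->
  exists m : 'I_n.+1,
    steps_sum (fun i => (i < m)%N) x <= - (eps * n%:R) \/
    steps_sum (fun i => ~~ (i < m)%N) x <= - (eps * n%:R).
Proof.
move=> /andP[/eqP/steps_sum_all sum_x /existsP[m Sm]]; exists m.
rewrite /steps_sum (bigID (fun i : 'I_n => (i < m)%N)) /= in sum_x.
move: Sm; rewrite /walkS; case: (lerP 0 (steps_sum (fun i => (i < m)%N) x)) => S0.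
  by rewrite ger0_norm // => Sm; right; rewrite /steps_sum in S0 Sm *; lra.
by rewrite ltr0_norm // => Sm; left; rewrite /steps_sum in S0 Sm *; lra.
Qed.

Lemma probSn_bigmax_le n (eps th U : R) : 0 <= th -> 1 <= U ->
  \sum_(k < n) mu k * expR (- (th * (k%:R - 1))) <= U ->
  probSn_neg1 mu n (bigmax_event n eps)
    <= 2 * n.+1%:R * (expR (- (th * (eps * n%:R))) * U ^+ n).
Proof.
move=> th0 U1 laplace_U; set a := eps * n%:R.
pose lo (m : 'I_n.+1) (x : n.-tuple 'I_n) := steps_sum (fun i => (i < m)%N) x <= - a.
pose hi (m : 'I_n.+1) (x : n.-tuple 'I_n) := steps_sum (fun i => ~~ (i < m)%N) x <= - a.
pose T x (m : 'I_n.+1) :=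
  (if lo m x then tuple_weight x else 0) + (if hi m x then tuple_weight x else 0).
have T0 x m : 0 <= T x m by rewrite addr_ge0 //; case: ifP; rewrite ?tuple_weight_ge0.
apply: le_trans (_ : \sum_x \sum_m T x m <= _).
  rewrite [X in _ <= X](bigID (fun x : n.-tuple 'I_n =>
    ((\sum_(i < n) (tnth x i : nat)).+1 == n) && bigmax_event n eps x)) /=.
  rewrite ler_wpDr ?sumr_ge0 // => [x _|]; first exact: sumr_ge0.
  apply: ler_sum => x /bigmax_event_steps[m lo_hi].
  rewrite (bigD1 m) //= ler_wpDr ?sumr_ge0 // /T /lo /hi.
  by case: lo_hi => ->; case: ifP; rewrite ?addr0 ?add0r ?lerDl ?lerDr ?tuple_weight_ge0.
rewrite exchange_big /=.
apply: le_trans (_ : \sum_(m < n.+1) 2 * (expR (- (th * a)) * U ^+ n) <= _); last first.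
  by rewrite sumr_const card_ord [X in _ <= X]mulrAC mulr_natr.
apply: ler_sum => m _; rewrite big_split /= -!big_mkcond /= mulr2n mulrDl mul1r.
by rewrite lerD ?chernoff_steps.
Qed.

End Numerator.

Arguments steps_sum {R n} B x.

Lemma bernoulli_ineq (R : realDomainType) (s : R) n : 0 <= s -> 1 - n%:R * (1 - s) <= s ^+ n.
Proof.
move=> s0; elim: n => [|n IHn]; first by rewrite mul0r subr0 expr0.
rewrite exprS; apply: le_trans (ler_wpM2l s0 IHn).
have : 0 <= n%:R * (1 - s) ^+ 2 by rewrite mulr_ge0 ?sqr_ge0.
rewrite -natr1; nra.
Qed.

Lemma dist_ge_of_not_near (R : realDomainType) (n w t : nat) :
  ~~ (n - w <= t <= n + w)%N -> (w%:R : R) <= `|t%:R - n%:R|.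
Proof.
rewrite negb_and -!ltnNge ler_normr opprB !lerBrDr -!natrD !ler_nat.
by case/orP => ?; apply/orP; [right | left]; lia.
Qed.

Section TypicalSums.
Variables (R : realType) (mu : nat -> R).
Hypotheses (hmu : offspring_dist mu) (hcrit : critical mu).

Definition tuple_sum p q (y : p.-tuple 'I_q) : nat := \sum_(i < p) (tnth y i : nat).

Lemma tuple_sumE p q (y : p.-tuple 'I_q) : tuple_sum y = sumn (map val y).
Proof. by rewrite sumnE big_map big_tuple. Qed.

Lemma steps_sumT n (y : n.-tuple 'I_n) : steps_sum predT y = (tuple_sum y)%:R - n%:R :> R.
Proof. by rewrite /steps_sum sumrB natr_sum sumr_const card_ord. Qed.

Lemma sum_tuple_weight n : \sum_(y : n.-tuple 'I_n) tuple_weight mu y = partial_mass mu n ^+ n.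
Proof.
rewrite (sum_prod_tuple (fun (_ : 'I_n) (k : 'I_n) => mu k)) prodr_const card_ord.
by rewrite /partial_mass big_mkord.
Qed.

Lemma sum_tuple_weight_ge : exists n0, forall n, (n0 <= n)%N ->
  3 / 4 <= \sum_(y : n.-tuple 'I_n) tuple_weight mu y.
Proof.
have [n0 Hn0] := partial_mean_near1 hcrit (divr_gt0 (ltr01 : (0 : R) < 1) (ltr0Sn R 3)).
exists n0 => n /Hn0 mean_near; rewrite sum_tuple_weight.
apply: le_trans (bernoulli_ineq _ (partial_mass_ge0 hmu n)).
have := tail_mass_le hmu hcrit n; lra.
Qed.

Lemma second_moment_steps_le L n : (L <= n)%N ->
  \sum_(y : n.-tuple 'I_n) tuple_weight mu y * steps_sum predT y ^+ 2
    <= n%:R * (1 + L%:R + n%:R * (1 - partial_mean mu L))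
       + n%:R ^+ 2 * (partial_mean mu n - partial_mass mu n) ^+ 2.
Proof.
move=> Ln; have mass_le1 : \sum_(k < n) mu k <= 1.
  by have := partial_mass_le1 hmu n; rewrite /partial_mass big_mkord.
have := second_moment_tuple_le n (fun k : 'I_n => (k : nat)%:R - 1) (fun k => mu_ge0 hmu k)
  mass_le1.
have -> : \sum_(k < n) mu k * ((k : nat)%:R - 1) = partial_mean mu n - partial_mass mu n.
  by rewrite /partial_mean /partial_mass -sumrB big_mkord; apply: eq_bigr => k _; ring.
move=> /le_trans; apply; rewrite lerD2r ler_wpM2l //.
rewrite -(big_mkord xpredT (fun k => mu k * (k%:R - 1) ^+ 2)).
apply: le_trans (_ : \sum_(0 <= k < n) (mu k + k%:R * (k%:R * mu k)) <= _).
  apply: ler_sum_nat => k _; have := mulr_ge0 (ler0n R k) (mu_ge0 hmu k); nra.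
rewrite big_split /= [X in _ + X](big_cat_nat (leq0n L) Ln) /=.
have low : \sum_(0 <= k < L) k%:R * (k%:R * mu k) <= L%:R * partial_mean mu L.
  rewrite /partial_mean mulr_sumr; apply: ler_sum_nat => k /andP[_ kL].
  by rewrite ler_wpM2r ?mulr_ge0 ?(mu_ge0 hmu) // ler_nat ltnW.
have high : \sum_(L <= k < n) k%:R * (k%:R * mu k)
    <= n%:R * (partial_mean mu n - partial_mean mu L).
  rewrite (partial_mean_split _ Ln) [partial_mean _ L + _]addrC addrK mulr_sumr.
  by apply: ler_sum_nat => k /andP[_ kn]; rewrite ler_wpM2r ?mulr_ge0 ?(mu_ge0 hmu) // ler_nat ltnW.
have : L%:R * partial_mean mu L <= L%:R by rewrite ler_piMr ?partial_mean_le1.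
have : n%:R * (partial_mean mu n - partial_mean mu L) <= n%:R * (1 - partial_mean mu L).
  by rewrite ler_wpM2l // lerD2r partial_mean_le1.
have := partial_mass_le1 hmu n; rewrite /partial_mass; lra.
Qed.

Lemma second_moment_steps_small e : 0 < e -> exists n0, forall n, (n0 <= n)%N ->
  \sum_(y : n.-tuple 'I_n) tuple_weight mu y * steps_sum predT y ^+ 2 <= e * n%:R ^+ 2.
Proof.
move=> e0; have e3 : 0 < e / 3 by rewrite divr_gt0.
have [L HL] := partial_mean_near1 hcrit e3.
have [N2 HN2] := partial_mass_near1 hmu e3.
pose N3 := (Num.truncn (3 * (1 + L%:R) / e)).+1.
exists (maxn L (maxn N2 N3)) => n; rewrite !geq_max => /andP[Ln /andP[N2n N3n]].
apply: le_trans (second_moment_steps_le Ln) _.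
have n_ge : 3 * (1 + L%:R) / e <= n%:R.
  by apply: le_trans (ltW (truncnS_gt _)) _; rewrite ler_nat.
have drift : (partial_mean mu n - partial_mass mu n) ^+ 2 <= e / 3.
  have := HL n Ln; have := HN2 n N2n; have := partial_mean_le1 hmu hcrit n.
  have := partial_mass_le1 hmu n; have := partial_mean_ge0 hmu n.
  have := partial_mass_ge0 hmu n; rewrite -real_normK ?num_real //.
  move: (partial_mean _ _) (partial_mass _ _) => a b *.
  have : `|a - b| <= e / 3 by rewrite ler_norml; lra.
  have : `|a - b| <= 1 by rewrite ler_norml; lra.
  have := normr_ge0 (a - b); nra.
have n0 : 0 <= n%:R :> R by [].
have t1 : n%:R * (1 + L%:R) <= e / 3 * n%:R ^+ 2.
  move: n_ge; rewrite ler_pdivrMr // => n_ge; nra.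
have t2 : n%:R ^+ 2 * (1 - partial_mean mu L) <= e / 3 * n%:R ^+ 2.
  by rewrite mulrC ler_wpM2r ?sqr_ge0 //; have := HL L (leqnn L); lra.
have t3 : n%:R ^+ 2 * (partial_mean mu n - partial_mass mu n) ^+ 2 <= e / 3 * n%:R ^+ 2.
  by rewrite mulrC ler_wpM2r ?sqr_ge0.
lra.
Qed.

Lemma atypical_weight_le (p : nat) : (0 < p)%N -> exists n0, forall n, (n0 <= n)%N ->
  forall w, (n %/ p <= w)%N ->
  \sum_(y : n.-tuple 'I_n | ~~ (n - w <= tuple_sum y <= n + w)%N) tuple_weight mu y <= 1 / 4.
Proof.
move=> p0; set P : R := p%:R; have P0 : 0 < P by rewrite ltr0n.
have [n0 Hn0] :=
  second_moment_steps_small (divr_gt0 ltr01 (mulr_gt0 (ltr0Sn R 15) (exprn_gt0 2 P0))).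
exists (maxn n0 p) => n; rewrite geq_max => /andP[/Hn0 moment_le pn] w nw.
set v : R := (n %/ p)%:R; have v0 : 0 < v by rewrite ltr0n divn_gt0.
have n_le : n%:R <= 2 * P * v.
  rewrite /P /v -natrM -natrM ler_nat; have := @ltn_ceil n p p0.
  have : (0 < n %/ p)%N by rewrite divn_gt0.
  nia.
have n_sq : n%:R ^+ 2 <= 4 * P ^+ 2 * v ^+ 2.
  have := ler0n R n; nra.
rewrite -(ler_pM2l (exprn_gt0 2 v0)).
apply: le_trans (_ : _ <= \sum_(y : n.-tuple 'I_n) tuple_weight mu y * steps_sum predT y ^+ 2) _.
  apply: (chebyshev_finsum (f := fun y : n.-tuple 'I_n => steps_sum predT y : R))
    => [y||y /(dist_ge_of_not_near R) dist_le].
  - exact: tuple_weight_ge0.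
  - exact: ltW.
  - by rewrite steps_sumT; apply: le_trans dist_le; rewrite ler_nat.
apply: le_trans moment_le _; rewrite mul1r ler_pdivrMl ?mulr_gt0 ?exprn_gt0 //; nra.
Qed.

Lemma typical_weight_ge (p : nat) : (0 < p)%N -> exists n0, forall n, (n0 <= n)%N ->
  forall w, (n %/ p <= w)%N ->
  1 / 2 <= \sum_(y : n.-tuple 'I_n | (n - w <= tuple_sum y <= n + w)%N) tuple_weight mu y.
Proof.
move=> /atypical_weight_le[n1 Hn1]; have [n2 Hn2] := sum_tuple_weight_ge.
exists (maxn n1 n2) => n; rewrite geq_max => /andP[/Hn1 atyp_le /Hn2] + w /atyp_le.
by rewrite (bigID (fun y => n - w <= tuple_sum y <= n + w)%N) /=; lra.
Qed.

End TypicalSums.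

Lemma mem_leq_sumn (s : seq nat) v : v \in s -> (v <= sumn s)%N.
Proof.
elim: s => // x s IHs; rewrite inE => /orP[/eqP ->|/IHs vs] /=; first exact: leq_addr.
exact: leq_trans vs (leq_addl _ _).
Qed.

Lemma sumn_flatten_nseq k (s : seq nat) : sumn (flatten (nseq k s)) = (k * sumn s)%N.
Proof. by elim: k => //= k IHk; rewrite sumn_cat IHk mulSn. Qed.

Lemma size_flatten_nseq (T : Type) k (s : seq T) : size (flatten (nseq k s)) = (k * size s)%N.
Proof. by elim: k => //= k IHk; rewrite size_cat IHk mulSn. Qed.

Lemma all_flatten_nseq (T : Type) (P : pred T) k (s : seq T) :
  all P s -> all P (flatten (nseq k s)).
Proof. by move=> Ps; elim: k => //= k IHk; rewrite all_cat Ps IHk. Qed.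

Section SupportSums.
Variables (R : realType) (mu : nat -> R).

Definition supp k := 0 < mu k.
Definition supp_sum t := exists2 s : seq nat, all supp s & sumn s = t.
Definition supp_diff x := exists a b, [/\ supp_sum a, supp_sum b & a = b + x]%N.

Lemma supp_sum0 : supp_sum 0.
Proof. by exists [::]. Qed.

Lemma supp_sumD a b : supp_sum a -> supp_sum b -> supp_sum (a + b).
Proof. by move=> [s Ss <-] [t St <-]; exists (s ++ t); rewrite ?all_cat ?Ss ?St ?sumn_cat. Qed.

Lemma supp_sumMn q a : supp_sum a -> supp_sum (q * a).
Proof.
move=> Sa; elim: q => [|q IHq]; first exact: supp_sum0.
by rewrite mulSn; apply: supp_sumD.
Qed.

(* The least positive [supp_diff] is the gcd of the additive semigroup generated by
   the support: the remainder of any sum modulo it is again a [supp_diff]. *)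
Lemma supp_sum_gcd k : (0 < k)%N -> supp_sum k ->
  exists e, [/\ (0 < e)%N, supp_diff e & forall t, supp_sum t -> (e %| t)%N].
Proof.
move=> k0 Sk.
have diff_ex : exists x, `[< (0 < x)%N /\ supp_diff x >].
  by exists k; apply/asboolP; split => //; exists k, 0%N; split => //; exact: supp_sum0.
case: (ex_minnP diff_ex) => e /asboolP[e0 De] e_min; exists e; split => // t St.
case: De => a [b [Sa Sb ab]].
have Dr : supp_diff (t %% e).
  exists (t + t %/ e * b)%N, (t %/ e * a)%N; split.
  - by apply: supp_sumD => //; apply: supp_sumMn.
  - exact: supp_sumMn.
  - by rewrite ab mulnDr {1}(divn_eq t e); lia.
apply/negPn/negP; rewrite -lt0n => r0.
by have := e_min _ (asboolT (conj r0 Dr)); rewrite leqNgt ltn_pmod.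
Qed.

Lemma all_supp_le (s : seq nat) K : all supp s -> (sumn s <= K)%N ->
  all (fun v => supp v && (v <= K)%N) s.
Proof.
move=> Ss sK; apply/allP => v vs; rewrite (allP Ss v vs).
exact: leq_trans (mem_leq_sumn vs) sK.
Qed.

(* Large multiples [d] of the gcd [e] are sums of boundedly large support points, using
   at most about [d / 2] of them: [d = q kst + rho e] with [rho e = rho a - rho b] rewritten
   as [rho a + (kst - 1) rho b + (q - rho b) kst], where [kst >= 2] carries the bulk. *)
Lemma supp_sum_short kst e : (2 <= kst)%N -> supp kst -> (e %| kst)%N -> supp_diff e ->
  exists K C F0, forall d, (e %| d)%N -> (F0 <= d)%N ->
    exists s : seq nat, [/\ all (fun v => supp v && (v <= K)%N) s, sumn s = d &
      (size s <= C + d %/ 2)%N].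
Proof.
move=> kst2 Skst e_kst [a [b [[sa Sa suma] [sb Sb sumb] ab]]].
have kst0 : (0 < kst)%N by apply: leq_trans kst2.
set K := (a + b + kst)%N; set ms := (kst %/ e)%N.
exists K, (ms * size sa + kst * ms * size sb)%N, (ms * b * kst)%N => d e_d Fd.
set q := (d %/ kst)%N; set rho := (d %% kst %/ e)%N.
have r_eq : (d %% kst = rho * e)%N.
  by rewrite divnK // -(dvdn_addr _ (dvdn_mull q e_kst)) -divn_eq.
have rho_lt : (rho < ms)%N.
  by rewrite -(ltn_pmul2r (dvdn_gt0 kst0 e_kst)) -r_eq divnK // ltn_pmod.
have bq : (rho * b <= q)%N.
  apply: leq_trans (_ : ms * b <= q)%N; first by rewrite leq_mul2r ltnW ?orbT.
  by have := leq_div2r kst Fd; rewrite mulnK.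
exists (flatten (nseq rho sa) ++ flatten (nseq ((kst - 1) * rho) sb) ++ nseq (q - rho * b) kst).
split.
- rewrite !all_cat all_nseq Skst /K leq_addl orbT andbT.
  apply/andP; split; apply: all_flatten_nseq; apply: all_supp_le => //.
    by rewrite suma -addnA leq_addr.
  by rewrite sumb addnAC leq_addl.
- rewrite !sumn_cat !sumn_flatten_nseq sumn_nseq suma sumb ab [in RHS](divn_eq d kst) r_eq.
  by rewrite -/q; nia.
- rewrite !size_cat !size_flatten_nseq size_nseq; have := @leq_div2l d 2 kst isT kst2.
  have := leq_mul (ltnW rho_lt) (leqnn (size sa)).
  have := leq_mul (leq_mul (leq_subr 1 kst) (ltnW rho_lt)) (leqnn (size sb)).
  lia.
Qed.

End SupportSums.

Section Concatenation.
Variables (R : realType) (mu : nat -> R).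
Hypothesis hmu : offspring_dist mu.

Let widen_cat n M (y : n.-tuple 'I_n) (z : M.-tuple 'I_(n + M)) :
  (n + M).-tuple 'I_(n + M) :=
  cat_tuple (map_tuple (widen_ord (leq_addr M n)) y) z.

Let widen_cat_inj n M : injective (fun u => widen_cat u.1 u.2 : (n + M).-tuple 'I_(n + M)).
Proof.
move=> [y1 z1] [y2 z2] /(congr1 val) /= /eqP.
rewrite eqseq_cat ?size_map ?size_tuple // => /andP[/eqP y12 /eqP z12].
congr pair; apply: val_inj => //; apply: inj_map y12 => i j /(congr1 val) /=; exact: val_inj.
Qed.

Let tuple_weightE p q (x : p.-tuple 'I_q) : tuple_weight mu x = \prod_(v <- x) mu v.
Proof. by rewrite big_tuple. Qed.

Let tuple_weight_widen_cat n M y z :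
  tuple_weight mu (@widen_cat n M y z) = tuple_weight mu y * tuple_weight mu z.
Proof. by rewrite !tuple_weightE big_cat /= big_map. Qed.

Let tuple_sum_widen_cat n M y z :
  tuple_sum (@widen_cat n M y z) = (tuple_sum y + tuple_sum z)%N.
Proof. by rewrite !tuple_sumE /= map_cat sumn_cat -map_comp. Qed.

Lemma probSn_cat_ge n M :
  \sum_(y : n.-tuple 'I_n)
     \sum_(z : M.-tuple 'I_(n + M) | (tuple_sum y + tuple_sum z).+1 == n + M)
       tuple_weight mu y * tuple_weight mu z <= probSn_neg1 mu (n + M) predT.
Proof.
rewrite pair_big_dep /=; apply: le_trans (sum_inj_le
  (fun x => ((tuple_sum x).+1 == n + M) && predT x) (@widen_cat_inj n M)
  (fun x => tuple_weight_ge0 hmu x)).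
rewrite le_eqVlt; apply/orP; left; apply/eqP.
apply: eq_big => [[y z]|[y z] _] /=; first by rewrite tuple_sum_widen_cat andbT.
by rewrite tuple_weight_widen_cat.
Qed.

Lemma ord_tuple_of_seq N M (s : seq nat) : size s = M -> all (fun v => v < N)%N s ->
  exists z : M.-tuple 'I_N, map val z = s.
Proof.
move=> size_s sN; have val_s : map val (pmap insub s : seq 'I_N) = s.
  by rewrite (pmap_filter (@insubK _ _ _)); apply/all_filterP; apply: sub_all sN => v vN /=;
    rewrite insubT.
have size_z : size (pmap insub s : seq 'I_N) == M by rewrite -size_s -(size_map val) val_s.
by exists (Tuple size_z).
Qed.

Lemma probSn_completion_ge n M (good : pred (n.-tuple 'I_n)) (c : R) : 0 <= c ->
  (forall y, good y -> 0 < tuple_weight mu y -> exists2 s : seq nat,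
     size s = M /\ (tuple_sum y + sumn s).+1 = (n + M)%N &
     forall v, v \in s -> (v < n + M)%N /\ c <= mu v) ->
  c ^+ M * \sum_(y | good y) tuple_weight mu y <= probSn_neg1 mu (n + M) predT.
Proof.
move=> c0 complete; apply: le_trans (probSn_cat_ge n M); rewrite mulr_sumr big_mkcond /=.
apply: ler_sum => y _.
have WW0 (z : M.-tuple 'I_(n + M)) : 0 <= tuple_weight mu y * tuple_weight mu z.
  by rewrite mulr_ge0 ?tuple_weight_ge0.
case: ifP => [good_y|_]; last exact: sumr_ge0.
have [Wy0|Wy_neq0] := eqVneq (tuple_weight mu y) 0.
  by rewrite Wy0 mulr0; apply: sumr_ge0 => z _; rewrite mul0r.
have Wy_pos : 0 < tuple_weight mu y by rewrite lt0r Wy_neq0 tuple_weight_ge0.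
have [s [size_s sum_s] s_ok] := complete y good_y Wy_pos.
have [z val_z] := ord_tuple_of_seq size_s (introT allP (fun v vs => (s_ok v vs).1)).
have sum_z : tuple_sum z = sumn s by rewrite tuple_sumE val_z.
have Wz : c ^+ M <= tuple_weight mu z.
  have -> : c ^+ M = \prod_(i < M) c by rewrite prodr_const card_ord.
  apply: ler_prod => i _; rewrite c0; apply: (s_ok _ _).2.
  by rewrite -val_z map_f ?mem_tnth.
rewrite (bigD1 z) /= ?sum_z ?sum_s //; apply: ler_wpDr; first exact: sumr_ge0.
by rewrite mulrC ler_wpM2l ?tuple_weight_ge0.
Qed.

End Concatenation.

Section Positivity.
Variables (R : realType) (mu : nat -> R).
Hypotheses (hmu : offspring_dist mu) (hcrit : critical mu).

Lemma tuple_weight_gt0_supp p q (x : p.-tuple 'I_q) i :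
  0 < tuple_weight mu x -> supp mu (tnth x i).
Proof.
move=> Wx; rewrite /supp lt0r (mu_ge0 hmu) andbT; apply: contraTneq Wx => mu0.
by rewrite /tuple_weight (bigD1 i) //= mu0 mul0r ltxx.
Qed.

Lemma tuple_weight_gt0_supp_sum p q (x : p.-tuple 'I_q) :
  0 < tuple_weight mu x -> supp_sum mu (tuple_sum x).
Proof.
move=> Wx; exists (map val x); last by rewrite tuple_sumE.
by apply/allP => _ /mapP[v /tnthP[i ->] ->]; exact: tuple_weight_gt0_supp.
Qed.

Lemma tuple_weight_gt0_supp0 N (x : N.-tuple 'I_N) :
  0 < tuple_weight mu x -> (tuple_sum x < N)%N -> supp mu 0.
Proof.
move=> Wx sum_lt; have [i /eqP xi0] : exists i, (tnth x i : nat) == 0%N.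
  apply/existsP; apply: contraTT sum_lt => /existsPn x_pos; rewrite -leqNgt.
  rewrite -[X in (X <= _)%N]card_ord -sum1_card /tuple_sum; apply: leq_sum => i _.
  by rewrite lt0n x_pos.
by rewrite -xi0; exact: tuple_weight_gt0_supp.
Qed.

Lemma probSn_gt0_supp N : 0 < probSn_neg1 mu N predT -> supp_sum mu (N - 1) /\ supp mu 0.
Proof.
move=> /gt_eqF/negbT/eqP/psumr_neq0P[]; first by move=> x _; exact: tuple_weight_ge0.
move=> x /andP[/andP[/eqP sum_x _] Wx]; rewrite -sum_x subn1 /=.
split; first exact: tuple_weight_gt0_supp_sum.
by apply: (tuple_weight_gt0_supp0 Wx); rewrite sum_x.
Qed.

(* A critical law charging 0 must charge some [k >= 2] to keep its mean at 1. *)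
Lemma supp_ge2 : supp mu 0 -> exists2 k, (2 <= k)%N & supp mu k.
Proof.
move=> supp0; case: (pselect (exists2 k, (2 <= k)%N & supp mu k)) => // no_k; exfalso.
have mu_ge2 k : (2 <= k)%N -> mu k = 0.
  move=> k2; apply/eqP; rewrite eq_le (mu_ge0 hmu) andbT leNgt.
  by apply/negP => mu_k; apply: no_k; exists k.
have mean_eq n : (2 <= n)%N -> partial_mean mu n = mu 1%N.
  move=> n2; rewrite (partial_mean_split _ n2) big1_seq ?addr0; last first.
    by move=> k /andP[_]; rewrite mem_index_iota => /andP[k2 _]; rewrite mu_ge2 // mulr0.
  by rewrite /partial_mean big_ltn // big_nat1 mul0r add0r mul1r.
have mu1_ge1 : 1 <= mu 1%N.
  apply/ler_addgt0Pr => e e0; have [N HN] := partial_mean_near1 hcrit e0.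
  by have := HN (maxn N 2) (leq_maxl _ _); rewrite mean_eq ?leq_maxr //; lra.
have := partial_mass_le1 hmu 2; rewrite /partial_mass big_ltn // big_nat1.
by move: supp0; rewrite /supp; lra.
Qed.

Definition min_supp_mass K := \big[Num.min/1]_(k < K.+1 | supp mu k) mu k.

Lemma min_supp_mass_gt0 K : 0 < min_supp_mass K.
Proof. by apply: (big_ind (fun x => 0 < x)) => // x y x0 y0; rewrite lt_min x0 y0. Qed.

Lemma min_supp_mass_le1 K : min_supp_mass K <= 1.
Proof.
apply: (big_ind (fun x => x <= 1)) => // [x y x1 _|i _]; last exact: mu_le1 hmu i.
by rewrite ge_min x1.
Qed.

Lemma min_supp_mass_le K k : (k <= K)%N -> supp mu k -> min_supp_mass K <= mu k.
Proof.
move=> kK supp_k; rewrite /min_supp_mass (bigD1 (Ordinal (kK : (k < K.+1)%N))) //=.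
by rewrite ge_min lexx.
Qed.

End Positivity.

Section Denominator.
Variables (R : realType) (mu : nat -> R).
Hypotheses (hmu : offspring_dist mu) (hcrit : critical mu).

(* Completes a window-typical prefix [t] to a total [n + M - 1] with [M] further
   offspring numbers: a short representation of the deficit, padded with zeros. *)
Lemma supp_completion (K C F0 C' e : nat) (c : R) : (2 * C + F0 < C')%N ->
  (forall d, (e %| d)%N -> (F0 <= d)%N -> exists s : seq nat,
     [/\ all (fun v => supp mu v && (v <= K)%N) s, sumn s = d & (size s <= C + d %/ 2)%N]) ->
  (forall k, (k <= K)%N -> supp mu k -> c <= mu k) -> supp mu 0 ->
  forall n w t, (K < n + (w + C'))%N -> (n - w <= t <= n + w)%N ->
  (e %| n + (w + C') - 1)%N -> (e %| t)%N ->
  exists2 s : seq nat, size s = (w + C')%N /\ (t + sumn s).+1 = (n + (w + C'))%N &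
    forall v, v \in s -> (v < n + (w + C'))%N /\ c <= mu v.
Proof.
move=> CC' short_rep c_le supp0 n w t KN /andP[tl tr] e_N e_t; set M := (w + C')%N.
have F0_le : (F0 <= n + M - 1 - t)%N by rewrite /M; lia.
have [s0 [s0_ok sum_s0 size_s0]] := short_rep _ (dvdn_sub e_N e_t) F0_le.
exists (s0 ++ nseq (M - size s0) 0%N); first split.
- by rewrite size_cat size_nseq subnKC // (leq_trans size_s0) // /M; lia.
- by rewrite sumn_cat sumn_nseq mul0n addn0 sum_s0 /M; lia.
move=> v; rewrite mem_cat => /orP[/(allP s0_ok)/andP[supp_v vK]|/nseqP[-> _]].
  by split; [exact: leq_ltn_trans KN | exact: c_le].
by split; [rewrite /M; lia | exact: c_le].
Qed.

Lemma probSn_ge_pow : (exists N1, 0 < probSn_neg1 mu N1 predT) ->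
  exists c C', [/\ 0 < c, c <= 1 & forall p, (1 < p)%N -> exists N0, forall N, (N0 <= N)%N ->
    0 < probSn_neg1 mu N predT -> c ^+ (N %/ p + C') * (1 / 2) <= probSn_neg1 mu N predT].
Proof.
move=> [N1 /(probSn_gt0_supp hmu)[_ supp0]].
have [kst kst2 supp_kst] := supp_ge2 hmu hcrit supp0.
have Skst : supp_sum mu kst by exists [:: kst]; rewrite /= ?supp_kst ?addn0.
have [e [_ De e_div]] := supp_sum_gcd (ltnW kst2) Skst.
have [K [C [F0 short_rep]]] := supp_sum_short kst2 supp_kst (e_div _ Skst) De.
pose c := min_supp_mass mu K; pose C' := (2 * C + F0).+1.
exists c, C'; split; [exact: min_supp_mass_gt0 | exact: min_supp_mass_le1 | move=> p p2].
have [n0 typical] := typical_weight_ge hmu hcrit (ltnW p2).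
exists (maxn (2 * (n0 + C')) K.+1) => N; rewrite geq_max => /andP[NC' KN].
move=> /(probSn_gt0_supp hmu)[SN _].
have Np := @leq_div2l N 2 p isT p2.
set M := (N %/ p + C')%N; set n := (N - M)%N.
have NnM : N = (n + M)%N by rewrite /n /M subnK //; lia.
rewrite NnM; apply: le_trans (probSn_completion_ge hmu (c := c)
  (good := fun y : n.-tuple 'I_n => (n - N %/ p <= tuple_sum y <= n + N %/ p)%N) _ _);
  last 2 first.
- exact: ltW (min_supp_mass_gt0 _ _).
- move=> y window Wy; apply: (supp_completion (ltnSn _) short_rep) => //.
  + by move=> k; exact: min_supp_mass_le.
  + by rewrite -NnM.
  + by rewrite -NnM; exact: e_div.
  + exact: e_div (tuple_weight_gt0_supp_sum hmu Wy).
rewrite ler_wpM2l ?exprn_ge0 ?(ltW (min_supp_mass_gt0 _ _)) // typical //.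
  by rewrite /n /M; lia.
by rewrite leq_div2r // /n leq_subr.
Qed.

End Denominator.

Section ExpGrowth.
Variable R : realType.

Lemma expR_ge_linear (d : R) : 0 < d ->
  exists N, forall n, (N <= n)%N -> 2 * n.+1%:R <= expR (d * n%:R).
Proof.
move=> d0; exists (Num.truncn (16 / d ^+ 2)).+1 => n Nn.
have n16 : 16 <= n%:R * d ^+ 2.
  rewrite -ler_pdivrMr ?exprn_gt0 //; apply: le_trans (ltW (truncnS_gt _)) _.
  by rewrite ler_nat.
have n1 : 1 <= n%:R :> R by rewrite ler1n (leq_trans _ Nn).
have half : d * n%:R / 2 <= expR (d * n%:R / 2).
  by apply: le_trans (expR_ge1Dx _); rewrite lerDr.
have half0 : 0 <= d * n%:R / 2 by rewrite divr_ge0 // mulr_ge0 // ltW.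
rewrite [d * _]splitr expRD; apply: (le_trans _ (ler_pM half0 half0 half half)).
have : n%:R * 16 <= n%:R * (n%:R * d ^+ 2) by rewrite ler_wpM2l.
rewrite -natr1; lra.
Qed.

Lemma expRN_le_const (a q : R) : 0 < a -> 0 < q ->
  exists N, forall n, (N <= n)%N -> expR (- (a * n%:R)) <= q.
Proof.
move=> a0 q0; exists (Num.truncn (1 / (a * q))).+1 => n Nn.
have n_ge : 1 / (a * q) <= n%:R.
  by apply: le_trans (ltW (truncnS_gt _)) _; rewrite ler_nat.
rewrite expRN -[_^-1]mul1r ler_pdivrMr ?expR_gt0 //.
apply: le_trans (ler_wpM2l (ltW q0) (expR_ge1Dx _)).
move: n_ge; rewrite ler_pdivrMr ?mulr_gt0 //; nra.
Qed.

(* [c ^ (N / p)] decays like [expR (- ln (1/c) N / p)], which is slower than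
   [expR (- eta N / 2)] once [p >= 2 ln (1/c) / eta]. *)
Lemma pow_div_ge_expR (c eta : R) : 0 < c -> c <= 1 -> 0 < eta ->
  exists2 p, (1 < p)%N & forall N, expR (- (eta / 2 * N%:R)) <= c ^+ (N %/ p).
Proof.
move=> c0 c1 eta0; have l0 : 0 <= - ln c by rewrite oppr_ge0 ln_le0.
exists (Num.truncn (2 * - ln c / eta)).+2 => // N; set p := (Num.truncn _).+2.
have : 2 * - ln c / eta <= p%:R.
  by apply: le_trans (ltW (truncnS_gt _)) _; rewrite ler_nat.
rewrite ler_pdivrMr // => /(ler_wpM2l (ler0n R (N %/ p))) lp.
have : (N %/ p)%:R * p%:R * eta <= N%:R * eta.
  by apply: ler_wpM2r; [exact: ltW | rewrite -natrM ler_nat leq_divM].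
rewrite -[c]lnK ?posrE // -expRM_natl ler_expR; lra.
Qed.

End ExpGrowth.

Section Ratio.
Variables (R : realType) (mu : nat -> R).
Hypotheses (hmu : offspring_dist mu) (hcrit : critical mu).

Lemma probSn_ge_expR (eta : R) : 0 < eta -> exists N0, forall N, (N0 <= N)%N ->
  0 < probSn_neg1 mu N predT -> expR (- (eta * N%:R)) <= probSn_neg1 mu N predT.
Proof.
move=> eta0; have [pos|no_pos] := pselect (exists N1, 0 < probSn_neg1 mu N1 predT); last first.
  by exists 0%N => N _ posN; case: no_pos; exists N.
have [c [C' [c0 c1 pow_le]]] := probSn_ge_pow hmu hcrit pos.
have [p p2 decay] := pow_div_ge_expR c0 c1 eta0.
have [N0 Hpow] := pow_le p p2.
have q0 : 0 < c ^+ C' * (1 / 2) by rewrite mulr_gt0 ?exprn_gt0.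
have [N1 small] := expRN_le_const (divr_gt0 eta0 (ltr0Sn R 1)) q0.
exists (maxn N0 N1) => N; rewrite geq_max => /andP[N0N N1N] posN.
apply: le_trans (Hpow N N0N posN); rewrite exprD -mulrA.
have -> : eta * N%:R = eta / 2 * N%:R + eta / 2 * N%:R by rewrite -mulrDl -splitr.
by rewrite opprD expRD ler_pM ?expR_ge0 ?small.
Qed.

Lemma probSn_bigmax_le_expR (eps : R) : 0 < eps -> exists2 delta, 0 < delta &
  exists N, forall n, (N <= n)%N ->
    probSn_neg1 mu n (bigmax_event n eps) <= expR (- (delta * n%:R)) * expR (- (delta * n%:R)).
Proof.
move=> eps0; have eps4 : 0 < eps / 4 by rewrite divr_gt0.
have [th [th0 _ [N1 laplace]]] := laplace_le hmu hcrit eps4.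
set delta := th * (eps / 4) in laplace *; have delta0 : 0 < delta by rewrite mulr_gt0.
exists delta => //; have [N2 lin] := expR_ge_linear delta0.
exists (maxn N1 N2) => n; rewrite geq_max => /andP[N1n N2n].
have U1 : 1 <= 1 + delta by rewrite lerDl ltW.
apply: le_trans (probSn_bigmax_le hmu eps (ltW th0) U1 (laplace n N1n)) _.
have U_le : (1 + delta) ^+ n <= expR (delta * n%:R).
  by rewrite mulrC expRM_natl lerXn2r ?nnegrE ?expR_ge0 ?(le_trans _ U1) // expR_ge1Dx.
have Un0 : 0 <= (1 + delta) ^+ n by rewrite exprn_ge0 // (le_trans _ U1).
apply: le_trans (_ : expR (delta * n%:R) *
  (expR (- (th * (eps * n%:R))) * expR (delta * n%:R)) <= _).
  by apply: ler_pM; rewrite ?mulr_ge0 ?expR_ge0 // ?lin // ler_wpM2l ?expR_ge0.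
rewrite -!expRD ler_expR /delta; lra.
Qed.

End Ratio.

Unset Implicit Arguments.
Set Strict Implicit.

Theorem mainTheorem14 (R : realType) (mu : nat -> R)
  (hmu : offspring_dist mu) (hcrit : critical mu) (eps : R) (heps : 0 < eps) :
  exists delta : R, 0 < delta /\
    exists N : nat, forall n : nat, (N <= n)%N ->
      0 < probSn_neg1 mu n predT ->
      probSn_neg1 mu n (bigmax_event n eps) / probSn_neg1 mu n predT
        <= expR (- (delta * n%:R)).
Proof.
have [delta delta0 [N1 num_le]] := probSn_bigmax_le_expR hmu hcrit heps.
exists delta; split => //; have [N2 den_ge] := probSn_ge_expR hmu hcrit delta0.
exists (maxn N1 N2) => n; rewrite geq_max => /andP[N1n N2n] pos.
rewrite ler_pdivrMr //; apply: le_trans (num_le n N1n) _.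
by rewrite ler_wpM2l ?expR_ge0 ?den_ge.
Qed.
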